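(* Let $(P_C)=\{(s_1,t_1),\dots,(s_k,t_k)\}$ be an $E$-unification problem with simple variable restriction, whose variables are $X\cup C$ with $X\cap C=\emptyset$, and let $\mathcal A=\mathbf F(X\cup C)/\theta$, where $\theta$ is the congruence generated by the pairs $(s_j,t_j)$, viewed as a regular subobject $\mathcal A^*$ of $\mathbf F(X)^*\times\mathbf F(C)^*\cong\mathbf F(X\cup C)^*$ in $\mathsf{Alg}^{op}_{fp}(E)$. Then the antisymmetric quotients (posetal reflections) of the preordered sets $U^{svr}_E(\mathcal A,C)$ and $U^{svr}_E(P_C)$ are isomorphic as posets.
   Context: $E$ is an equational theory in a signature $\mathcal L$ with at least one constant; $\mathbf F(Y)$ is the free $E$-algebra on a finite set $Y$, and $\mathsf{Alg}^{op}_{fp}(E)$ the opposite of the category of finitely presented $E$-algebras, with $\mathcal B^*$, $f^*$ denoting the formal duals of algebras and homomorphisms; products in it are dual to coproducts, so $\mathbf F(X)^*\times\mathbf F(C)^*\cong\mathbf F(X\cup C)^*$, and regular subobjects of $\mathcal B^*$ correspond to finitely presented quotients of $\mathcal B$. Symbolic side: a substitution $\sigma$ is $C$-invariant if $\sigma(c)=c$ for $c\in C$ and $\sigma(x)$ contains no variable from $C$ for $x\notin C$; $U^{svr}_E(P_C)$ is the set of $C$-invariant substitutions $\sigma$ with domain $Fm_{\mathcal L}(X\cup C)$ such that $\sigma(s_j)=_E\sigma(t_j)$ for all $j$ (where $=_E$ means equality provable in $E$), preordered by: $\tau\le_C\sigma$ iff $\tau=_E\theta\circ\sigma$ for some substitution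 $\theta$. Algebraic side: $U^{svr}_E(\mathcal A,C)$ is the set of homomorphisms $\sigma:\mathbf F(X)\to\mathbf F(Z)$ ($Z$ finite) such that $\sigma^*\times 1:\mathbf F(Z)^*\times\mathbf F(C)^*\to\mathbf F(X)^*\times\mathbf F(C)^*$ factors through the mono $\mathcal A^*\hookrightarrow\mathbf F(X)^*\times\mathbf F(C)^*$ (equivalently $\sigma+1:\mathbf F(X\cup C)\to\mathbf F(Z\cup C)$ factors through the quotient $\mathbf F(X\cup C)\to\mathcal A$), preordered by: $\gamma:\mathbf F(X)\to\mathbf F(W)$ is below $\sigma$ iff $k\circ\sigma=\gamma$ for some homomorphism $k:\mathbf F(Z)\to\mathbf F(W)$. *)

From mathcomp Require Import all_boot.
Set Implicit Arguments.
Unset Strict Implicit.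
Unset Printing Implicit Defensive.

Record signature := Signature { funsym : Type; arity : funsym -> nat }.

Section Terms.
Variable L : signature.

Inductive term (V : Type) : Type :=
| Var : V -> term V
| App : forall f : funsym L, ('I_(arity f) -> term V) -> term V.
Arguments Var {V} v.
Arguments App {V} f args.

Fixpoint subst (V W : Type) (s : V -> term W) (t : term V) : term W :=
  match t with
  | Var v => s v
  | App f args => App f (fun i => subst s (args i))
  end.

Fixpoint occurs (V : Type) (v : V) (t : term V) : Prop :=
  match t with
  | Var w => w = v
  | App f args => exists i, occurs v (args i)
  end.

Definition eq_theory := term nat * term nat -> Prop.

Inductive eqE (E : eq_theory) (V : Type) : term V -> term V -> Prop :=
| eqE_refl t : eqE E t t
| eqE_sym t u : eqE E t u -> eqE E u t
| eqE_trans t u w : eqE E t u -> eqE E u w -> eqE E t w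
| eqE_cong f (a b : 'I_(arity f) -> term V) :
    (forall i, eqE E (a i) (b i)) -> eqE E (App f a) (App f b)
| eqE_ax l r (s : nat -> term V) : E (l, r) -> eqE E (subst s l) (subst s r).

Inductive eqGen (E : eq_theory) (V : Type) (k : nat) (s t : 'I_k -> term V)
  : term V -> term V -> Prop :=
| eqGen_E a b : eqE E a b -> eqGen E s t a b
| eqGen_pair j : eqGen E s t (s j) (t j)
| eqGen_sym a b : eqGen E s t a b -> eqGen E s t b a
| eqGen_trans a b c : eqGen E s t a b -> eqGen E s t b c -> eqGen E s t a c
| eqGen_cong f (a b : 'I_(arity f) -> term V) :
    (forall i, eqGen E s t (a i) (b i)) -> eqGen E s t (App f a) (App f b).

Record salg := SAlg {
  scar : Type;
  sequiv : scar -> scar -> Prop;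
  sop : forall f : funsym L, ('I_(arity f) -> scar) -> scar }.

Definition is_hom (A B : salg) (h : scar A -> scar B) : Prop :=
  (forall a b, sequiv a b -> sequiv (h a) (h b)) /\
  (forall f (args : 'I_(arity f) -> scar A),
      sequiv (h (sop args)) (sop (fun i => h (args i)))).

Definition hom (A B : salg) := {h : scar A -> scar B | is_hom h}.

Definition FreeAlg (E : eq_theory) (Y : Type) : salg :=
  @SAlg (term Y) (@eqE E Y) (@App Y).

Definition QuotAlg (E : eq_theory) (V : Type) (k : nat) (s t : 'I_k -> term V)
  : salg := @SAlg (term V) (eqGen E s t) (@App V).

(* The quotient homomorphism F(V) -> F(V)/theta (identity on representatives). *)
Definition quot_map (V : Type) (t : term V) : term V := t.

(* sigma + 1 : F(X+C) -> F(Z+C), the coproduct of sigma : F(X) -> F(Z) with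
   the identity of F(C), computed through F(X+C) = F(X)+F(C). *)
Definition coprod_id (E : eq_theory) (X Z C : Type)
  (sigma : hom (FreeAlg E X) (FreeAlg E Z)) (u : term (X + C)) : term (Z + C) :=
  subst (fun v => match v with
                  | inl x => subst (fun z => Var (@inl Z C z)) (sval sigma (Var x))
                  | inr c => Var (inr c)
                  end) u.

Definition U_alg (E : eq_theory) (X C : Type) (k : nat) (s t : 'I_k -> term (X + C)) :=
  {Z : finType &
   {sigma : hom (FreeAlg E X) (FreeAlg E Z) |
     exists g : hom (QuotAlg E s t) (FreeAlg E (Z + C)),
       forall u, eqE E (sval g (quot_map u)) (@coprod_id E X Z C sigma u)}}.

Definition alg_le (E : eq_theory) (X C : Type) (k : nat) (s t : 'I_k -> term (X + C))
  (gamma sigma : @U_alg E X C k s t) : Prop :=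
  exists kk : hom (FreeAlg E (projT1 sigma)) (FreeAlg E (projT1 gamma)),
    forall u : term X,
      eqE E (sval kk (sval (sval (projT2 sigma)) u)) (sval (sval (projT2 gamma)) u).

(* The global (countably infinite) set of variables, containing X and C. *)
Definition Vars (X C : Type) := ((X + C) + nat)%type.

Definition C_invariant (X C : Type) (sigma : X + C -> term (Vars X C)) : Prop :=
  (forall c : C, sigma (inr c) = Var (inl (inr c))) /\
  (forall (x : X) (c : C), ~ occurs (inl (inr c)) (sigma (inl x))).

Definition U_sym (E : eq_theory) (X C : Type) (k : nat) (s t : 'I_k -> term (X + C)) :=
  {sigma : X + C -> term (Vars X C) |
    C_invariant sigma /\ forall j, eqE E (subst sigma (s j)) (subst sigma (t j))}.

Definition sym_le (E : eq_theory) (X C : Type) (k : nat) (s t : 'I_k -> term (X + C))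
  (tau sigma : @U_sym E X C k s t) : Prop :=
  exists theta : Vars X C -> term (Vars X C),
    forall v : X + C, eqE E (sval tau v) (subst theta (sval sigma v)).

End Terms.

Section Reflection.
Variables (U : Type) (le : U -> U -> Prop).

Definition pclass := {P : U -> Prop | exists a, P = (fun b => le a b /\ le b a)}.

Definition pclass_le (p q : pclass) : Prop :=
  exists a b, sval p a /\ sval q b /\ le a b.
End Reflection.

Definition poset_iso (P Q : Type) (leP : P -> P -> Prop) (leQ : Q -> Q -> Prop) :=
  exists phi : P -> Q, bijective phi /\ forall p q, leP p q <-> leQ (phi p) (phi q).

Definition posetal_reflections_iso (U V : Type) (leU : U -> U -> Prop) (leV : V -> V -> Prop) :=
  poset_iso (@pclass_le U leU) (@pclass_le V leV).

(* An algebraic unifier sigma : F(X) -> F(Z) becomes a symbolic one by sending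
   x to sigma(x), with the finitely many variables of Z renamed into the global
   variable supply, and each c in C to itself; that sigma + 1 factors through
   A = F(X u C)/theta says exactly that this substitution unifies the pairs
   (s_j, t_j).  The translation preserves and reflects subsumption, and every
   C-invariant symbolic unifier is equivalent to the translation of the
   algebraic unifier whose Z is the finite set of variables occurring in its
   values on X.  A dense order embedding of preorders induces an isomorphism
   of their posetal reflections. *)

From mathcomp Require Import all_boot.
From Stdlib Require Import FunctionalExtensionality PropExtensionality ProofIrrelevance ClassicalEpsilon.
Set Implicit Arguments. Unset Strict Implicit. Unset Printing Implicit Defensive.

Section Reflection.
Variables (U : Type) (le : U -> U -> Prop).
Hypothesis le_refl : forall a, le a a.
Hypothesis le_trans : forall a b c, le a b -> le b c -> le a c.

Definition pequiv (a b : U) := le a b /\ le b a.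

Lemma pequiv_refl a : pequiv a a.
Proof. by split. Qed.

Lemma pequiv_sym a b : pequiv a b -> pequiv b a.
Proof. by case. Qed.

Lemma pequiv_trans a b c : pequiv a b -> pequiv b c -> pequiv a c.
Proof. by case=> ab ba [bc cb]; split; [exact: le_trans ab bc | exact: le_trans cb ba]. Qed.

Definition pclass_of (a : U) : pclass le := exist _ (pequiv a) (ex_intro _ a erefl).

Definition pclass_repr (p : pclass le) : U :=
  sval (constructive_indefinite_description _ (svalP p)).

Lemma pclass_reprK p : pclass_of (pclass_repr p) = p.
Proof.
rewrite /pclass_repr; case: constructive_indefinite_description => a Ha.
case: p Ha => P HP /= Ha; subst P; congr exist; exact: proof_irrelevance.
Qed.

Lemma pclass_of_eq a b : pequiv a b -> pclass_of a = pclass_of b.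
Proof.
move=> ab; have Eab : pequiv a = pequiv b.
  apply: functional_extensionality => c; apply: propositional_extensionality; split.
  - exact: pequiv_trans (pequiv_sym ab).
  - exact: pequiv_trans ab.
rewrite /pclass_of; move: (ex_intro _ a _) (ex_intro _ b _); rewrite Eab => p q.
congr exist; exact: proof_irrelevance.
Qed.

Lemma eq_pclass_of a b : pclass_of a = pclass_of b -> pequiv a b.
Proof. by move/(f_equal (fun p => sval p b)) => /= ->; exact: pequiv_refl. Qed.

Lemma pclass_repr_of a : pequiv (pclass_repr (pclass_of a)) a.
Proof. exact/eq_pclass_of/pclass_reprK. Qed.

Lemma pclass_le_of a b : pclass_le (pclass_of a) (pclass_of b) <-> le a b.
Proof.
split; last by move=> ab; exists a, b; do !split.
by case=> a' [b' [/= [aa' _] [[_ b'b] a'b']]]; exact: le_trans (le_trans aa' a'b') b'b.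
Qed.
End Reflection.

Lemma posetal_reflections_iso_of_dense_embedding (U V : Type)
  (leU : U -> U -> Prop) (leV : V -> V -> Prop)
  (reflU : forall a, leU a a) (transU : forall a b c, leU a b -> leU b c -> leU a c)
  (reflV : forall a, leV a a) (transV : forall a b c, leV a b -> leV b c -> leV a c)
  (F : U -> V) :
  (forall a b, leU a b <-> leV (F a) (F b)) ->
  (forall b, exists a, pequiv leV (F a) b) ->
  posetal_reflections_iso leU leV.
Proof.
move=> F_le F_dense.
pose G b := sval (constructive_indefinite_description _ (F_dense b)).
have FG b : pequiv leV (F (G b)) b by rewrite /G; case: constructive_indefinite_description.
have F_equiv a b : pequiv leU a b <-> pequiv leV (F a) (F b).
  by split=> -[ab ba]; split; apply/F_le.
pose phi (p : pclass leU) := pclass_of leV (F (pclass_repr p)).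
pose psi (q : pclass leV) := pclass_of leU (G (pclass_repr q)).
exists phi; split.
- exists psi => [p|q].
  + rewrite -[RHS](pclass_reprK p); apply: pclass_of_eq => //; apply/F_equiv.
    exact: (pequiv_trans transV (FG _) (pclass_repr_of reflV _)).
  + rewrite -[RHS](pclass_reprK q); apply: pclass_of_eq => //; rewrite /psi.
    exact: (pequiv_trans transV (proj1 (F_equiv _ _) (pclass_repr_of reflU _)) (FG _)).
- move=> p q; rewrite -[in X in X <-> _](pclass_reprK p) -[in X in X <-> _](pclass_reprK q).
  rewrite !pclass_le_of //; exact: F_le.
Qed.

Section Terms.
Variables (L : signature) (E : eq_theory L).

Lemma subst_comp (U V W : Type) (r : V -> term L W) (s : U -> term L V) t :
  subst r (subst s t) = subst (fun v => subst r (s v)) t.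
Proof.
elim: t => [v|f a IH] //=; congr App; apply: functional_extensionality => i; exact: IH.
Qed.

Lemma subst_Var (V : Type) (t : term L V) : subst (@Var L V) t = t.
Proof.
elim: t => [v|f a IH] //=; congr App; apply: functional_extensionality => i; exact: IH.
Qed.

Lemma eq_in_subst (V W : Type) (a b : V -> term L W) t :
  (forall v, occurs v t -> a v = b v) -> subst a t = subst b t.
Proof.
elim: t => [v|f g IH] /= ab; first exact: ab.
congr App; apply: functional_extensionality => i; apply: IH => v Hv; apply: ab; by exists i.
Qed.

Lemma eq_subst (V W : Type) (a b : V -> term L W) t :
  a =1 b -> subst a t = subst b t.
Proof. by move=> ab; apply: eq_in_subst => v _. Qed.

Lemma occurs_subst (V W : Type) (r : V -> term L W) t w :
  occurs w (subst r t) -> exists2 v, occurs v t & occurs w (r v).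
Proof.
elim: t => [v|f g IH] /=; first by exists v.
by case=> i /IH [v vi wv]; exists v => //; exists i.
Qed.

Lemma eqE_subst (V W : Type) (r : V -> term L W) t u :
  eqE E t u -> eqE E (subst r t) (subst r u).
Proof.
elim=> {t u} [t|t u _ IH|t u w _ IH1 _ IH2|f a b _ IH|l r' s El].
- exact: eqE_refl.
- exact: eqE_sym.
- exact: eqE_trans IH1 IH2.
- exact: eqE_cong.
- rewrite !subst_comp; exact: eqE_ax.
Qed.

Lemma subst_eqE (V W : Type) (a b : V -> term L W) t :
  (forall v, eqE E (a v) (b v)) -> eqE E (subst a t) (subst b t).
Proof. by move=> ab; elim: t => [v|f g IH] /=; [exact: ab | exact: eqE_cong]. Qed.

Lemma subst_is_hom (V W : Type) (r : V -> term L W) :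
  is_hom (A := FreeAlg E V) (B := FreeAlg E W) (subst r).
Proof. by split=> [a b|f args]; [exact: eqE_subst | exact: eqE_refl]. Qed.

Definition subst_hom (V W : Type) (r : V -> term L W) : hom (FreeAlg E V) (FreeAlg E W) :=
  exist _ (subst r) (subst_is_hom r).

Lemma hom_comp_is_hom (U V W : Type) (h1 : hom (FreeAlg E V) (FreeAlg E W))
  (h2 : hom (FreeAlg E U) (FreeAlg E V)) :
  is_hom (A := FreeAlg E U) (B := FreeAlg E W) (sval h1 \o sval h2).
Proof.
case: h1 => h1 [cong1 op1]; case: h2 => h2 [cong2 op2]; split => /= [a b ab|f args].
- exact/cong1/cong2.
- exact: eqE_trans (cong1 _ _ (op2 f args)) (op1 _ _).
Qed.

Lemma hom_eqE_subst (V W : Type) (h : hom (FreeAlg E V) (FreeAlg E W)) u :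
  eqE E (sval h u) (subst (fun v => sval h (Var L v)) u).
Proof.
case: h => h [_ h_op] /=; elim: u => [v|f g IH] /=; first exact: eqE_refl.
exact: eqE_trans (h_op f g) (eqE_cong IH).
Qed.

Fixpoint vars (V : Type) (t : term L V) : seq V :=
  match t with
  | Var v => [:: v]
  | App f args => flatten [seq vars (args i) | i <- enum 'I_(arity f)]
  end.

Lemma occurs_vars (V : eqType) (t : term L V) v : occurs v t -> v \in vars t.
Proof.
elim: t => [w|f g IH] /=; first by move=> ->; rewrite inE.
case=> i /IH vi; apply/flattenP; exists (vars (g i)) => //.
by apply/mapP; exists i; rewrite ?mem_enum.
Qed.
End Terms.

Section Unifiers.
Variables (L : signature) (E : eq_theory L).
Variables (X C : finType) (k : nat) (s t : 'I_k -> term L (X + C)).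

Lemma alg_le_refl (a : U_alg E s t) : alg_le a a.
Proof. by exists (subst_hom E (@Var L _)) => u /=; rewrite subst_Var; exact: eqE_refl. Qed.

Lemma alg_le_trans (a b c : U_alg E s t) : alg_le a b -> alg_le b c -> alg_le a c.
Proof.
case=> k1 H1 [k2 H2]; exists (exist _ _ (hom_comp_is_hom k1 k2)) => u /=.
exact: eqE_trans (proj1 (svalP k1) _ _ (H2 u)) (H1 u).
Qed.

Lemma sym_le_refl (a : U_sym E s t) : sym_le a a.
Proof. by exists (@Var L _) => v; rewrite subst_Var; exact: eqE_refl. Qed.

Lemma sym_le_trans (a b c : U_sym E s t) : sym_le a b -> sym_le b c -> sym_le a c.
Proof.
case=> th1 H1 [th2 H2]; exists (fun w => subst th1 (th2 w)) => v.
by rewrite -subst_comp; exact: eqE_trans (H1 v) (eqE_subst _ (H2 v)).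
Qed.

Lemma coprod_id_unifies (a : U_alg E s t) j :
  eqE E (coprod_id (sval (projT2 a)) (s j)) (coprod_id (sval (projT2 a)) (t j)).
Proof.
case: a => Z [sigma [g Hg]] /=.
apply: eqE_trans (eqE_sym (Hg (s j))) (eqE_trans _ (Hg (t j))).
exact/(proj1 (svalP g))/eqGen_pair.
Qed.

Definition fin_var (Z : finType) (z : Z) : term L (Vars X C) :=
  Var L (inr (nat_of_ord (enum_rank z))).

Definition const_var (c : C) : term L (Vars X C) := Var L (inl (inr c)).

Definition sym_subst_of_alg (a : U_alg E s t) (v : X + C) : term L (Vars X C) :=
  match v with
  | inl x => subst (@fin_var (projT1 a)) (sval (sval (projT2 a)) (Var L x))
  | inr c => const_var c
  end.

Lemma subst_coprod_id (a : U_alg E s t) u :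
  subst (fun v => match v with inl z => fin_var z | inr c => const_var c end)
    (coprod_id (sval (projT2 a)) u) = subst (sym_subst_of_alg a) u.
Proof. by rewrite /coprod_id subst_comp; apply: eq_subst => -[x|c] //=; rewrite subst_comp. Qed.

Lemma sym_subst_of_alg_unifier (a : U_alg E s t) :
  C_invariant (sym_subst_of_alg a) /\
  forall j, eqE E (subst (sym_subst_of_alg a) (s j)) (subst (sym_subst_of_alg a) (t j)).
Proof.
split; first by split=> // x c cx; case: (occurs_subst cx).
move=> j; rewrite -!subst_coprod_id; exact/eqE_subst/coprod_id_unifies.
Qed.

Definition sym_of_alg (a : U_alg E s t) : U_sym E s t :=
  exist _ (sym_subst_of_alg a) (sym_subst_of_alg_unifier a).

Lemma sym_of_alg_le (a b : U_alg E s t) : alg_le a b -> sym_le (sym_of_alg a) (sym_of_alg b).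
Proof.
case: a b => Za [ga Ha] [Zb [gb Hb]] [/= kk Hk].
pose theta (w : Vars X C) : term L (Vars X C) :=
  if w is inr n then
    if insub n : option 'I_#|Zb| is Some i
    then subst (@fin_var Za) (sval kk (Var L (enum_val i))) else Var L w
  else Var L w.
exists theta => -[x|c] /=; last exact: eqE_refl.
rewrite subst_comp.
have -> : subst (fun v => subst theta (fin_var v)) (sval gb (Var L x)) =
          subst (@fin_var Za) (subst (fun z => sval kk (Var L z)) (sval gb (Var L x))).
  by rewrite subst_comp; apply: eq_subst => z /=; rewrite /theta valK enum_rankK.
exact/eqE_subst/(eqE_trans (eqE_sym (Hk _)))/hom_eqE_subst.
Qed.

Section Constant.
Variables (f0 : funsym L) (f0_const : arity f0 = 0).

Lemma ord_arity_f0_empty : 'I_(arity f0) -> False.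
Proof. by rewrite f0_const => -[]. Qed.

Definition const_term (V : Type) : term L V :=
  App (f := f0) (fun i => False_rect _ (ord_arity_f0_empty i)).

(* Variables outside the finite set Z must be sent somewhere in F(Z); this is
   where the constant of the signature is needed. *)
Definition fin_var_inv (Z : finType) (w : Vars X C) : term L Z :=
  if w is inr n then
    if insub n : option 'I_#|Z| is Some i then Var L (enum_val i) else const_term _
  else const_term _.

Lemma fin_var_invK (Z : finType) (u : term L Z) :
  subst (@fin_var_inv Z) (subst (@fin_var Z) u) = u.
Proof.
rewrite subst_comp -[RHS]subst_Var; apply: eq_subst => z.
by rewrite /= valK enum_rankK.
Qed.

Lemma sym_of_alg_le_inv (a b : U_alg E s t) :
  sym_le (sym_of_alg a) (sym_of_alg b) -> alg_le a b.
Proof.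
case: a b => Za [ga Ha] [Zb [gb Hb]] [/= theta Htheta].
pose kappa (z : Zb) := subst (@fin_var_inv Za) (subst theta (fin_var z)).
have kappa_gen x : eqE E (subst kappa (sval gb (Var L x))) (sval ga (Var L x)).
  rewrite -[sval ga _]fin_var_invK; apply: eqE_sym.
  apply: eqE_trans (eqE_subst _ (Htheta (inl x))) _.
  by rewrite /= !subst_comp; exact: eqE_refl.
exists (subst_hom E kappa) => u /=.
apply: eqE_trans (eqE_subst _ (hom_eqE_subst gb u)) _.
rewrite subst_comp; apply: eqE_trans (subst_eqE _ kappa_gen) _.
exact: eqE_sym (hom_eqE_subst ga u).
Qed.

Section AlgOfSym.
Variable sigma : U_sym E s t.

Definition occurring_vars : seq (Vars X C) :=
  flatten [seq vars (sval sigma (inl x)) | x <- enum X].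

Local Notation Z := 'I_(size occurring_vars).

Definition index_var (w : Vars X C) : term L Z :=
  if insub (index w occurring_vars) is Some i then Var L i else const_term _.

Definition alg_subst_of_sym : hom (FreeAlg E X) (FreeAlg E Z) :=
  subst_hom E (fun x => subst index_var (sval sigma (inl x))).

Lemma eq_in_sigma_C_free (W : Type) (a b : Vars X C -> term L W) x :
  (forall w, ~ (exists c, w = inl (inr c)) -> a w = b w) ->
  subst a (sval sigma (inl x)) = subst b (sval sigma (inl x)).
Proof.
move=> ab; apply: eq_in_subst => w wx; apply: ab => -[c Ew]; subst w.
exact: (proj2 (proj1 (svalP sigma)) x c wx).
Qed.

Definition lift_index_var (w : Vars X C) : term L (Z + C) :=
  if w is inl (inr c) then Var L (inr c)
  else subst (fun z => Var L (inl z)) (index_var w).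

Lemma coprod_id_alg_subst_of_sym u :
  coprod_id alg_subst_of_sym u = subst lift_index_var (subst (sval sigma) u).
Proof.
rewrite /coprod_id subst_comp; apply: eq_subst => -[x|c] /=.
- rewrite subst_comp; apply: eq_in_sigma_C_free => -[[x'|c']|n] //= nC.
  by case: nC; exists c'.
- by rewrite (proj1 (proj1 (svalP sigma)) c).
Qed.

Lemma coprod_id_alg_subst_of_sym_hom :
  is_hom (A := QuotAlg E s t) (B := FreeAlg E (Z + C)) (coprod_id alg_subst_of_sym).
Proof.
split=> /= [a b|f args]; last exact: eqE_refl.
elim=> {a b} [a b ab|j|a b _ IH|a b c _ IH1 _ IH2|f a b _ IH].
- exact: eqE_subst.
- rewrite !coprod_id_alg_subst_of_sym; exact/eqE_subst/(proj2 (svalP sigma) j).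
- exact: eqE_sym.
- exact: eqE_trans IH1 IH2.
- exact: eqE_cong.
Qed.

Lemma alg_subst_of_sym_factors :
  exists g : hom (QuotAlg E s t) (FreeAlg E (Z + C)),
    forall u, eqE E (sval g (quot_map u)) (coprod_id alg_subst_of_sym u).
Proof. by exists (exist _ _ coprod_id_alg_subst_of_sym_hom) => u; exact: eqE_refl. Qed.

Definition alg_of_sym : U_alg E s t :=
  existT _ (Z : finType) (exist _ alg_subst_of_sym alg_subst_of_sym_factors).

Lemma sym_of_alg_of_sym_le : sym_le (sym_of_alg alg_of_sym) sigma.
Proof.
pose theta (w : Vars X C) : term L (Vars X C) :=
  if w is inl (inr c) then Var L w else subst (@fin_var Z) (index_var w).
exists theta => -[x|c] /=; last by rewrite (proj1 (proj1 (svalP sigma)) c); exact: eqE_refl.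
rewrite subst_comp (@eq_in_sigma_C_free _ theta (fun w => subst (@fin_var Z) (index_var w)));
  first exact: eqE_refl.
by move=> [[x'|c']|n] //= nC; case: nC; exists c'.
Qed.

Lemma le_sym_of_alg_of_sym : sym_le sigma (sym_of_alg alg_of_sym).
Proof.
pose theta (w : Vars X C) : term L (Vars X C) :=
  if w is inr n then
    if insub n : option 'I_#|Z| is Some i
    then Var L (nth (inr 0) occurring_vars (enum_val i)) else Var L w
  else Var L w.
exists theta => -[x|c] /=; last by rewrite (proj1 (proj1 (svalP sigma)) c); exact: eqE_refl.
suff -> : subst theta (subst (@fin_var Z) (subst index_var (sval sigma (inl x))))
          = sval sigma (inl x) by exact: eqE_refl.
rewrite !subst_comp -[RHS]subst_Var; apply: eq_in_subst => w wx.
have w_occ : w \in occurring_vars.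
  apply/flattenP; exists (vars (sval sigma (inl x))); last exact: occurs_vars.
  by apply/mapP; exists x; rewrite ?mem_enum.
rewrite /index_var; case: insubP => [i _ Ei|]; last by rewrite index_mem w_occ.
by rewrite /= /theta valK enum_rankK Ei nth_index.
Qed.
End AlgOfSym.
End Constant.
End Unifiers.

Theorem mainTheorem4 (L : signature) (E : eq_theory L)
  (hconst : exists f : funsym L, arity f = 0)
  (X C : finType) (k : nat) (s t : 'I_k -> term L (X + C)) :
  posetal_reflections_iso (@alg_le L E X C k s t) (@sym_le L E X C k s t).
Proof.
case: hconst => f0 f0_const.
apply: (posetal_reflections_iso_of_dense_embedding (@alg_le_refl L E X C k s t)
  (@alg_le_trans L E X C k s t) (@sym_le_refl L E X C k s t) (@sym_le_trans L E X C k s t)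
  (F := @sym_of_alg L E X C k s t)).
- by move=> a b; split; [exact: sym_of_alg_le | exact: (sym_of_alg_le_inv f0_const)].
- move=> sigma; exists (alg_of_sym f0_const sigma).
  by split; [exact: sym_of_alg_of_sym_le | exact: le_sym_of_alg_of_sym].
Qed.
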